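(* Let $p$ be an odd prime and $n$ an odd positive integer, and let $d=\frac{p^n+1}{p+1}$. Then the power function $F(x)=x^d$ on $\mathrm{GF}(p^n)$ is perfect $c$-nonlinear for $c=-1$.
   Context: For a function $F:\mathrm{GF}(p^n)\to\mathrm{GF}(p^n)$ and $a,b,c\in\mathrm{GF}(p^n)$, let ${}_c\Delta_F(a,b)=\#\{x\in\mathrm{GF}(p^n): F(x+a)-cF(x)=b\}$. The $c$-differential uniformity of $F$ is ${}_c\Delta_F=\max\{{}_c\Delta_F(a,b): a,b\in\mathrm{GF}(p^n),\ \text{and } a\neq 0 \text{ if } c=1\}$. $F$ is perfect $c$-nonlinear (P$c$N) if ${}_c\Delta_F=1$. *)

From HB Require Import structures.
From mathcomp Require Import all_boot all_order all_algebra all_field.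
Set Implicit Arguments. Unset Strict Implicit. Unset Printing Implicit Defensive.
Import GRing.Theory.
Local Open Scope ring_scope.

Definition cDelta (K : finFieldType) (f : K -> K) (c a b : K) : nat :=
  #|[set x : K | f (x + a) - c * f x == b]|.

Definition c_diff_unif (K : finFieldType) (f : K -> K) (c : K) : nat :=
  \max_(ab : K * K | (c != 1) || (ab.1 != 0)) cDelta f c ab.1 ab.2.

Definition PcN (K : finFieldType) (f : K -> K) (c : K) : Prop :=
  c_diff_unif f c = 1%N.

From HB Require Import structures.
From mathcomp Require Import all_boot all_order all_algebra all_field.
From mathcomp Require Import ring zify.
Import GRing.Theory.
Local Open Scope ring_scope.

Set Implicit Arguments.
Unset Strict Implicit.

(* Let q = p^n, P = p^(n-1) and k = (P + 1)/2, so that d p k = 1 mod q - 1.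
   If (x + a)^d + x^d = b, then y = -x^d determines x = -(y^k)^p, and
   ((y + b)^k + y^k)^p = a; hence uniqueness of x reduces to the injectivity of
   t |-> (t + 1)^k + t^k on GF(q).  For the latter, pass to the algebraic
   closure and write t = X^2, t + 1 = Y^2, s = (X + Y)^2.  Since X^q = +-X and
   Y^q = +-Y, s^q is s or s^-1, i.e. s^(q-1) = 1 or s^(q+1) = 1; moreover
   4t = s + s^-1 - 2 and 2((t + 1)^k + t^k) = s^k + s^-k.  As k is prime to
   q - 1 and q + 1, s^k determines s among these roots of unity, so the value
   (t + 1)^k + t^k determines s up to inversion, hence t. *)

Lemma pchar_odd_two_neq0 (R : nzRingType) (p : nat) :
  p \in [pchar R] -> odd p -> 2%:R != 0 :> R.
Proof.
move=> pR p_odd; rewrite -(dvdn_pcharf pR).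
have p_gt1 := prime_gt1 (pcharf_prime pR).
by apply/negP => /(dvdn_leq (isT : 0 < 2)%N); case: p pR p_odd p_gt1 => [|[|[|]]].
Qed.

Lemma expf_card_pred (K : finFieldType) (x : K) : x != 0 -> x ^+ #|K|.-1 = 1.
Proof.
move=> x_neq0; apply: (mulfI x_neq0).
by rewrite -exprS prednK ?expf_card ?mulr1 //; apply/card_gt0P; exists 0.
Qed.

Lemma expf_mul_card_pred_addn1 (K : finFieldType) (c : nat) (x : K) :
  x ^+ (c * #|K|.-1 + 1) = x.
Proof.
have [-> | x_neq0] := eqVneq x 0; first by rewrite expr0n addn1.
by rewrite exprD mulnC exprM expf_card_pred // expr1n mul1r expr1.
Qed.

Lemma expr_inj_coprime (R : idomainType) (k N : nat) (s t : R) :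
  coprime k N -> (0 < N)%N -> s ^+ N = 1 -> t ^+ N = 1 -> s ^+ k = t ^+ k -> s = t.
Proof.
move=> /eqnP k_coprime N_gt0 sN tN skt.
have [a _] := Bezoutl k N_gt0; rewrite gcdnC k_coprime => /dvdnP[c Bez].
have mul_pow_eq1 (u : R) : u ^+ N = 1 -> u * (u ^+ k) ^+ a = 1.
  by move=> uN; rewrite -exprM -exprS (_ : (k * a).+1 = N * c)%N ?exprM ?uN ?expr1n //; nia.
have ska_neq0 : (s ^+ k) ^+ a != 0.
  apply/eqP => ska0; move: (mul_pow_eq1 s sN).
  by rewrite ska0 mulr0 => /eqP; rewrite eq_sym oner_eq0.
by apply: (mulIf ska_neq0); rewrite mul_pow_eq1 // skt mul_pow_eq1.
Qed.

Lemma addr_inv_eq (R : idomainType) (u u' v v' : R) :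
  u * u' = 1 -> v * v' = 1 -> u + u' = v + v' -> u = v \/ u = v'.
Proof.
move=> uu' vv' uv; have : (u - v) * (u - v') == 0.
  have -> : (u - v) * (u - v') = u * (u + u') - u * (v + v') + (v * v' - u * u') by ring.
  by rewrite uv uu' vv' !subrr addr0.
by rewrite mulf_eq0 !subr_eq0 => /orP[] /eqP; [left | right].
Qed.

Lemma closed_sqrt (F : closedFieldType) (a : F) : exists X, X ^+ 2 = a.
Proof.
have [X sqrX] := @solve_monicpoly F 2 (nth 0 [:: a]) isT; exists X; rewrite sqrX.
by rewrite !big_ord_recl big_ord0 /= expr0 mulr1 mul0r !addr0.
Qed.

(* 2((t + 1)^k + t^k) = s^k + s^-k for t = X^2, t + 1 = Y^2, s = (X + Y)^2 and
   s^-1 = (Y - X)^2. *)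
Lemma sqr_half_frobenius_sum (R : comNzRingType) (P k : nat) (X Y : R) :
  [pchar R].-nat P -> k.*2 = P.+1 ->
  ((X + Y) ^+ 2) ^+ k + ((Y - X) ^+ 2) ^+ k = 2%:R * ((Y ^+ 2) ^+ k + (X ^+ 2) ^+ k).
Proof.
move=> P_pchar kE; rewrite -!exprM !mul2n kE !exprS.
by rewrite !exprDn_pchar // exprNn_pchar //; ring.
Qed.

Definition qpm1_root (R : nzRingType) (q : nat) (s : R) : bool :=
  (s ^+ q.-1 == 1) || (s ^+ q.+1 == 1).

Lemma qpm1_rootV (R : comNzRingType) (q : nat) (s s' : R) :
  s * s' = 1 -> qpm1_root q s -> qpm1_root q s'.
Proof.
move=> ss'; have inv_root m : s ^+ m = 1 -> s' ^+ m = 1.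
  by move=> sm; rewrite -[LHS]mul1r -{1}sm -exprMn ss' expr1n.
by rewrite /qpm1_root; case/orP => /eqP/inv_root ->; rewrite eqxx ?orbT.
Qed.

Lemma qpm1_root_expr_inj (R : idomainType) (q k : nat) (s t : R) :
  (1 < q)%N -> odd k -> coprime k q.-1 -> coprime k q.+1 ->
  qpm1_root q s -> qpm1_root q t -> s ^+ k = t ^+ k -> s = t.
Proof.
move=> q_gt1 k_odd k_coprime_pred k_coprime_succ.
have pred_q_gt0 : (0 < q.-1)%N by lia.
have inj_pred := expr_inj_coprime k_coprime_pred pred_q_gt0.
have inj_succ := expr_inj_coprime k_coprime_succ (ltn0Sn q).
(* u^k is then a root of unity of order dividing gcd (q - 1, q + 1) = 2 *)
have mixed (u v : R) : u ^+ q.-1 = 1 -> v ^+ q.+1 = 1 -> u ^+ k = v ^+ k -> u = v.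
  move=> uq vq uv.
  have wq : (u ^+ k) ^+ q.-1 = 1 by rewrite -exprM mulnC exprM uq expr1n.
  have wq' : (u ^+ k) ^+ q.+1 = 1 by rewrite uv -exprM mulnC exprM vq expr1n.
  have wk : (u ^+ k) ^+ k = u ^+ k.
    have : (u ^+ k) ^+ 2 == 1.
      by rewrite -wq' (_ : q.+1 = q.-1 + 2)%N ?exprD ?wq ?mul1r //; lia.
    rewrite sqrf_eq1 => /orP[] /eqP ->; first by rewrite expr1n.
    by rewrite -signr_odd k_odd expr1.
  apply: (@eq_trans _ _ (u ^+ k)); first by apply: inj_pred; rewrite ?wk.
  by apply: inj_succ; rewrite ?wk.
by case/orP=> /eqP sq; case/orP=> /eqP tq st; [exact: inj_pred | exact: mixed
  | exact/esym/mixed | exact: inj_succ].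
Qed.

Section HalfFrobeniusSum.

Variables (K : finFieldType) (L : closedFieldType) (f : {rmorphism K -> L}).
Variables (p e P k : nat).
Hypotheses (pK : p \in [pchar K]) (p_odd : odd p) (cardK : #|K| = (p ^ e)%N).
Hypotheses (P_pchar : [pchar K].-nat P) (kE : k.*2 = P.+1).

Local Notation q := #|K|.

Let pL : p \in [pchar L] := rmorph_pchar f pK.

Let P_pcharL : [pchar L].-nat P.
Proof. by rewrite (eq_pnat _ (fmorph_pchar f)). Qed.

Let q_odd : odd q. Proof. by rewrite cardK oddX p_odd orbT. Qed.

Let q_pchar : [pchar L].-nat q.
Proof. by rewrite cardK pnatX pnatE ?pL ?(pcharf_prime pL). Qed.

Let q_gt1 : (1 < q)%N.
Proof. by apply/card_gt1P; exists 0, 1; rewrite eq_sym oner_neq0. Qed.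

Lemma sqrt_frobenius (x : K) (X : L) : X ^+ 2 = f x -> X ^+ q = X \/ X ^+ q = - X.
Proof.
move=> sqrX; have [x0 | x_neq0] := eqVneq x 0.
  move/eqP: sqrX; rewrite x0 rmorph0 expf_eq0 /= => /eqP ->.
  by left; rewrite expr0n gtn_eqF ?(ltnW q_gt1).
have qE : q = (q./2.*2).+1 by rewrite -[LHS]odd_double_half q_odd.
have -> : X ^+ q = X * f (x ^+ q./2).
  by rewrite {1}qE exprS -mul2n exprM sqrX rmorphXn.
have : (x ^+ q./2) ^+ 2 == 1.
  by rewrite -exprM mulnC mul2n -(expf_card_pred x_neq0) {2}qE.
rewrite sqrf_eq1 => /orP[] /eqP ->.
  by left; rewrite rmorph1 mulr1.
by right; rewrite rmorphN1 mulrN1.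
Qed.

Lemma sqr_sum_frobenius (x y : K) (X Y : L) : X ^+ 2 = f x -> Y ^+ 2 = f y ->
  ((X + Y) ^+ 2) ^+ q = (X + Y) ^+ 2 \/ ((X + Y) ^+ 2) ^+ q = (Y - X) ^+ 2.
Proof.
move=> /sqrt_frobenius sqrX /sqrt_frobenius sqrY.
rewrite -exprM mulnC exprM exprDn_pchar //.
by case: sqrX => ->; case: sqrY => ->; [left | right | right | left]; ring.
Qed.

Lemma qpm1_root_decomposition (x : K) : exists s s' : L,
  [/\ s * s' = 1, qpm1_root q s,
      2%:R * f ((x + 1) ^+ k + x ^+ k) = s ^+ k + s' ^+ k
    & 4%:R * f x = s + s' - 2%:R].
Proof.
have [X sqrX] := closed_sqrt (f x); have [Y sqrY] := closed_sqrt (f (x + 1)).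
have zz' : (X + Y) * (Y - X) = 1.
  have -> : (X + Y) * (Y - X) = Y ^+ 2 - X ^+ 2 by ring.
  by rewrite sqrY sqrX rmorphD rmorph1 addrAC subrr add0r.
have sqr_zz' : (X + Y) ^+ 2 * (Y - X) ^+ 2 = 1 by rewrite -exprMn zz' expr1n.
exists ((X + Y) ^+ 2), ((Y - X) ^+ 2); split => //.
- have z_neq0 : (X + Y) ^+ 2 != 0.
    by apply/eqP => z0; move/eqP: sqr_zz'; rewrite z0 mul0r eq_sym oner_eq0.
  case: (sqr_sum_frobenius sqrX sqrY) => zq; apply/orP; [left | right].
    by apply/eqP/(mulIf z_neq0); rewrite mul1r -exprSr prednK ?(ltnW q_gt1).
  by rewrite exprSr zq mulrC sqr_zz'.
- by rewrite rmorphD !rmorphXn -sqrX -sqrY (sqr_half_frobenius_sum _ _ P_pcharL kE).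
- have -> : 2%:R = 2%:R * ((X + Y) * (Y - X)) :> L by rewrite zz' mulr1.
  by rewrite -sqrX; ring.
Qed.

Hypotheses (k_odd : odd k) (k_coprime_pred : coprime k q.-1).
Hypothesis k_coprime_succ : coprime k q.+1.

Lemma half_frobenius_sum_inj : injective (fun t : K => (t + 1) ^+ k + t ^+ k).
Proof.
move=> x1 x2 /= sum_eq.
have [s1 [s1' [ss1' s1_root sum1 x1E]]] := qpm1_root_decomposition x1.
have [s2 [s2' [ss2' s2_root sum2 x2E]]] := qpm1_root_decomposition x2.
have expr_inj := qpm1_root_expr_inj (R := L) q_gt1 k_odd k_coprime_pred k_coprime_succ.
have sk_sum : s1 ^+ k + s1' ^+ k = s2 ^+ k + s2' ^+ k by rewrite -sum1 -sum2 sum_eq.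
have exprk_inv (s s' : L) : s * s' = 1 -> s ^+ k * s' ^+ k = 1.
  by move=> ss'; rewrite -exprMn ss' expr1n.
have s_eq : s1 + s1' = s2 + s2'.
  rewrite -(mulr1_eq ss1') -(mulr1_eq ss2').
  case: (addr_inv_eq (exprk_inv _ _ ss1') (exprk_inv _ _ ss2') sk_sum) => sk12.
    by rewrite (expr_inj _ _ s1_root s2_root sk12).
  rewrite (expr_inj _ _ s1_root (qpm1_rootV ss2' s2_root) sk12).
  by rewrite -(mulr1_eq ss2') invrK addrC.
have four_neq0 : 4%:R != 0 :> L.
  by rewrite (_ : 4 = 2 * 2)%N // natrM mulf_neq0 // (pchar_odd_two_neq0 pL p_odd).
by apply: (fmorph_inj f); apply: (mulfI four_neq0); rewrite x1E x2E s_eq.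
Qed.

End HalfFrobeniusSum.

Lemma shifted_sum_expr_eq (K : fieldType) (k : nat) (b y1 y2 : K) :
  2%:R != 0 :> K -> injective (fun t : K => (t + 1) ^+ k + t ^+ k) ->
  (y1 + b) ^+ k + y1 ^+ k = (y2 + b) ^+ k + y2 ^+ k -> y1 ^+ k = y2 ^+ k.
Proof.
move=> two_neq0 sum_inj; have [-> | b_neq0] := eqVneq b 0.
  rewrite !addr0 -!mulr2n -(mulr_natl (y1 ^+ k)) -(mulr_natl (y2 ^+ k)).
  exact: mulfI.
have scale (y : K) : (y + b) ^+ k + y ^+ k = ((y / b + 1) ^+ k + (y / b) ^+ k) * b ^+ k.
  by rewrite mulrDl -!exprMn mulrDl divfK // mul1r.
rewrite !scale => /(mulIf (expf_neq0 k b_neq0))/sum_inj y12.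
by rewrite -(divfK b_neq0 y1) y12 divfK.
Qed.

Lemma sum_expr_uniq (K : fieldType) (p d k : nat) :
  p \in [pchar K] -> odd p -> odd k -> (forall x : K, x ^+ (d * (p * k)) = x) ->
  injective (fun t : K => (t + 1) ^+ k + t ^+ k) ->
  forall a b x1 x2 : K,
  (x1 + a) ^+ d + x1 ^+ d = b -> (x2 + a) ^+ d + x2 ^+ d = b -> x1 = x2.
Proof.
move=> pK p_odd k_odd dpk_id sum_inj a b x1 x2 E1 E2.
have p_pchar : [pchar K].-nat p by rewrite pnatE ?(pcharf_prime pK).
have frob_inj (u v : K) : u ^+ p = v ^+ p -> u = v.
  by rewrite -!(pFrobenius_autE pK); exact: fmorph_inj.
have exprdkp (x : K) : ((x ^+ d) ^+ k) ^+ p = x by rewrite -!exprM [(k * p)%N]mulnC dpk_id.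
have neg_exprd (x : K) : ((- x ^+ d) ^+ k) ^+ p = - x.
  by rewrite exprNn -signr_odd k_odd expr1 mulN1r exprNn_pchar // exprdkp.
have frob_sum (x : K) :
    (x + a) ^+ d + x ^+ d = b -> ((- x ^+ d + b) ^+ k + (- x ^+ d) ^+ k) ^+ p = a.
  move=> E; have -> : - x ^+ d + b = (x + a) ^+ d by rewrite -E addrC addrK.
  by rewrite exprDn_pchar // exprdkp neg_exprd addrAC subrr add0r.
apply: oppr_inj; rewrite -(neg_exprd x1) -(neg_exprd x2); congr (_ ^+ p).
apply: (shifted_sum_expr_eq (b := b) (pchar_odd_two_neq0 pK p_odd) sum_inj).
by apply: frob_inj; rewrite !frob_sum.
Qed.

Lemma PcN_of_unique_solution (K : finFieldType) (F : K -> K) (c : K) :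
  c != 1 ->
  (forall a b x1 x2, F (x1 + a) - c * F x1 = b -> F (x2 + a) - c * F x2 = b -> x1 = x2) ->
  PcN F c.
Proof.
move=> c_neq1 uniq_sol; rewrite /PcN /c_diff_unif; apply/eqP; rewrite eqn_leq.
apply/andP; split.
  apply/bigmax_leqP => -[a b] _ /=; apply/card_le1_eqP => x1 x2.
  by rewrite !inE => /eqP E1 /eqP E2; exact: uniq_sol _ _ _ _ E2 E1.
apply: (@leq_trans (cDelta F c 0 (F 0 - c * F 0))).
  by apply/card_gt0P; exists 0; rewrite inE addr0.
by apply: (leq_bigmax_cond (0 : K, F 0 - c * F 0)); rewrite c_neq1.
Qed.

Lemma odd_sqr_expnE (r t : nat) :
  exists j, ((2 * r + 1) ^ (2 * t) = 1 + 4 * r * (r + 1) * j)%N.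
Proof.
rewrite expnM; elim: t => [|t [j IH]]; first by exists 0%N; rewrite expn0 muln0.
by exists (1 + j + 4 * r * (r + 1) * j)%N; rewrite expnS IH; ring.
Qed.

Lemma coprime_of_dvdn_add (k N e t : nat) :
  (k %| N + e)%N -> k = (1 + e * t)%N -> coprime k N.
Proof.
move=> k_dvd kE; rewrite /coprime -dvdn1.
have gcd_dvd_e : (gcdn k N %| e)%N.
  by rewrite -(dvdn_addr _ (dvdn_gcdr k N)) (dvdn_trans (dvdn_gcdl k N)).
by rewrite -(dvdn_addl _ (dvdn_mulr t gcd_dvd_e)) -kE dvdn_gcdl.
Qed.

(* With p = 2r + 1 and p^(n-1) = 1 + 4r(r+1)j, all exponents of the header
   become explicit polynomials in r and j. *)
Section Exponents.

Variables r j : nat.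

Local Notation p := (2 * r + 1)%N.
Local Notation P := (1 + 4 * r * (r + 1) * j)%N.
Local Notation k := (1 + 2 * r * (r + 1) * j)%N.

Let pred_pPE : ((p * P).-1 = 2 * r + p * (4 * r * (r + 1) * j))%N.
Proof. by rewrite mulnDr muln1 addnAC addn1. Qed.

Lemma half_expE : (k.*2 = P.+1)%N.
Proof. by rewrite -mul2n -addn1; ring. Qed.

Lemma half_exp_odd : odd k.
Proof. by rewrite oddD !oddM. Qed.

Lemma coprime_half_exp_pred : coprime k (p * P).-1.
Proof.
apply: (@coprime_of_dvdn_add _ _ (2 * r + 2) (r * j)); last ring.
by apply/dvdnP; exists (2 * p)%N; rewrite pred_pPE; ring.
Qed.

Lemma coprime_half_exp_succ : coprime k (p * P).+1.
Proof.
apply: (@coprime_of_dvdn_add _ _ (2 * r) ((r + 1) * j)); last ring.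
by apply/dvdnP; exists (2 * p)%N; rewrite -addn1; ring.
Qed.

Lemma div_expE : ((p * P + 1) %/ (p + 1) = 1 + 2 * r * p * j)%N.
Proof.
have -> : (p * P + 1 = (1 + 2 * r * p * j) * (p + 1))%N by ring.
by rewrite mulnK // addn1.
Qed.

Lemma div_exp_mul_half_expE :
  ((1 + 2 * r * p * j) * (p * k) = (1 + r * p * j) * (p * P).-1 + 1)%N.
Proof. by rewrite pred_pPE; ring. Qed.

End Exponents.

Theorem mainTheorem5 (p n : nat) (K : finFieldType) :
  prime p -> odd p -> odd n -> (0 < n)%N ->
  p \in [pchar K] -> #|K| = (p ^ n)%N ->
  PcN (fun x : K => x ^+ ((p ^ n + 1) %/ (p + 1))) (-1).
Proof.
move=> p_prime p_odd n_odd _ pK cardK.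
have [r pE] : exists r, p = (2 * r + 1)%N.
  by exists p./2; rewrite -[LHS]odd_double_half p_odd addnC -mul2n.
have [t nE] : exists t, n = (2 * t + 1)%N.
  by exists n./2; rewrite -[LHS]odd_double_half n_odd addnC -mul2n.
have [j Pj] := odd_sqr_expnE r t.
subst p n.
have P_pchar : [pchar K].-nat (1 + 4 * r * (r + 1) * j)%N.
  by rewrite -Pj pnatX pnatE ?pK.
have qE : #|K| = ((2 * r + 1) * (1 + 4 * r * (r + 1) * j))%N.
  by rewrite cardK (addn1 (2 * t)) expnS Pj.
rewrite -cardK qE div_expE.
apply: PcN_of_unique_solution => [|a b x1 x2].
  by rewrite eq_sym -addr_eq0 -mulr2n (pchar_odd_two_neq0 pK p_odd).
rewrite !mulN1r !opprK; apply: (sum_expr_uniq pK p_odd (half_exp_odd r j)).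
  by move=> x; rewrite div_exp_mul_half_expE -qE expf_mul_card_pred_addn1.
have [L [f _]] := countable_algebraic_closure K.
apply: (half_frobenius_sum_inj f pK p_odd cardK P_pchar (half_expE r j) (half_exp_odd r j)).
  by rewrite qE coprime_half_exp_pred.
by rewrite qE coprime_half_exp_succ.
Qed.
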